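(* Let $G,H$ be graphs with $H$ connected and let $b$ be a positive integer. Consider the $(H,b)$ deletion algorithm: starting from $G_0=G$, as long as possible obtain $G_{i+1}$ from $G_i$ by deleting, arbitrarily, either a bad vertex, a bad edge, a bad set, or (the vertex set of) a small component, all defined with respect to the current graph $G_i$ and the fixed $H,b$. Then, regardless of the arbitrary choices made, the algorithm terminates with the $(H,b)$-core of $G$. In particular the $(H,b)$-core of $G$ is $(H,b)$-stable.
   Context: With respect to a graph $F$, a connected graph $H$ and a positive integer $b$: a bad vertex is a vertex of $F$ lying in no copy of $H$ in $F$; a bad edge is an edge of $F$ lying in no copy of $H$ in $F$; a bad set is a set $U\subseteq V(F)$ with $2\le|U|\le b+1$ such that no copy $\hat H$ of $H$ in $F$ satisfies $|V(\hat H)\cap U|=1$; a small component is a connected component of $F$ with at most $(b+1)(v(H)-1)$ vertices. A graph is $(H,b)$-stable if none of these four exist in it. The $(H,b)$-core of $G$ is the union of all $(H,b)$-stable subgraphs of $G$. *)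

From Stdlib Require Import Relations ClassicalEpsilon.
From HB Require Import structures.
From mathcomp Require Import all_boot.
Set Implicit Arguments. Unset Strict Implicit. Unset Printing Implicit Defensive.

Definition sgraph (V : finType) := ({set V} * {set {set V}})%type.
Definition verts {V : finType} (F : sgraph V) : {set V} := F.1.
Definition edges {V : finType} (F : sgraph V) : {set {set V}} := F.2.

Definition wf_graph {V : finType} (F : sgraph V) : Prop :=
  forall e, e \in edges F -> #|e| = 2 /\ e \subset verts F.

Definition subgraph {V : finType} (F G : sgraph V) : Prop :=
  [/\ verts F \subset verts G, edges F \subset edges G & wf_graph F].

Definition adj {V : finType} (F : sgraph V) : rel V :=
  fun x y => [set x; y] \in edges F.

Definition connected_graph {W : finType} (H : sgraph W) : Prop :=
  (0 < #|verts H|) /\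
  forall x y, x \in verts H -> y \in verts H -> connect (adj H) x y.

Definition is_copy {W V : finType} (H : sgraph W) (F K : sgraph V) : Prop :=
  exists f : W -> V,
    [/\ {in verts H &, injective f},
        f @: verts H \subset verts F,
        (forall e : {set W}, e \in edges H -> f @: e \in edges F) &
        K = (f @: verts H, [set f @: e | e : {set W} in edges H])].

Definition bad_vertex {W V : finType} (H : sgraph W) (F : sgraph V) (v : V) : Prop :=
  v \in verts F /\ ~ (exists K, is_copy H F K /\ v \in verts K).

Definition bad_edge {W V : finType} (H : sgraph W) (F : sgraph V) (e : {set V}) : Prop :=
  e \in edges F /\ ~ (exists K, is_copy H F K /\ e \in edges K).

Definition bad_set {W V : finType} (H : sgraph W) (b : nat) (F : sgraph V)
    (U : {set V}) : Prop :=
  [/\ U \subset verts F, 2 <= #|U| <= b.+1 &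
      ~ (exists K, is_copy H F K /\ #|verts K :&: U| = 1)].

Definition component {V : finType} (F : sgraph V) (C : {set V}) : Prop :=
  exists2 x, x \in verts F & C = [set y in verts F | connect (adj F) x y].

Definition small_component {W V : finType} (H : sgraph W) (b : nat)
    (F : sgraph V) (C : {set V}) : Prop :=
  component F C /\ #|C| <= b.+1 * (#|verts H| - 1).

Definition stable {W V : finType} (H : sgraph W) (b : nat) (F : sgraph V) : Prop :=
  [/\ forall v, ~ bad_vertex H F v,
      forall e, ~ bad_edge H F e,
      forall U, ~ bad_set H b F U &
      forall C, ~ small_component H b F C].

Definition del_verts {V : finType} (F : sgraph V) (U : {set V}) : sgraph V :=
  (verts F :\: U, [set e in edges F | [disjoint e & U]]).
Definition del_edge {V : finType} (F : sgraph V) (e : {set V}) : sgraph V :=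
  (verts F, edges F :\ e).

Inductive del_step {W V : finType} (H : sgraph W) (b : nat) (F : sgraph V)
  : sgraph V -> Prop :=
| step_vertex v : bad_vertex H F v -> del_step H b F (del_verts F [set v])
| step_edge e : bad_edge H F e -> del_step H b F (del_edge F e)
| step_set U : bad_set H b F U -> del_step H b F (del_verts F U)
| step_comp C : small_component H b F C -> del_step H b F (del_verts F C).

Definition pbool (P : Prop) : bool :=
  if excluded_middle_informative P then true else false.

Definition core {W V : finType} (H : sgraph W) (b : nat) (G : sgraph V) : sgraph V :=
  (\bigcup_(F : sgraph V | pbool (subgraph F G /\ stable H b F)) verts F,
   \bigcup_(F : sgraph V | pbool (subgraph F G /\ stable H b F)) edges F).

From Stdlib Require Import Relations Classical ClassicalEpsilon Wellfounded Wf_nat.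
From mathcomp Require Import all_boot.
Set Implicit Arguments. Unset Strict Implicit. Unset Printing Implicit Defensive.

(* The heart of the argument is a survival property: if S is an (H,b)-stable
   subgraph of the current graph F, then S is still a subgraph of the graph
   obtained from F by any single deletion step.  Indeed copies of H in S are
   copies in F, so no vertex or edge of S is bad in F; a bad set of F cannot
   meet S (its trace on S would be a bad set of S, or a single vertex of S,
   which lies in a copy of H inside S); and a small component of F cannot
   meet S (it would contain a whole component of S, which would then be
   small).  Consequently every graph reachable from G contains every stable
   subgraph of G, hence the core.  On the other hand each step deletes at
   least one vertex or edge, so the algorithm terminates, and a terminal
   graph is by definition stable; being a stable subgraph of G it is
   contained in the core.  So every terminal graph is the core, and since a
   terminal graph exists, the core is stable. *)

Definition le_graph {V : finType} (F G : sgraph V) : Prop :=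
  verts F \subset verts G /\ edges F \subset edges G.

Lemma le_graph_refl {V : finType} (F : sgraph V) : le_graph F F.
Proof. by split. Qed.

Lemma le_graph_trans {V : finType} (A B C : sgraph V) :
  le_graph A B -> le_graph B C -> le_graph A C.
Proof.
by move=> [AB1 AB2] [BC1 BC2]; split; [apply: subset_trans BC1|apply: subset_trans BC2].
Qed.

Lemma pboolP (P : Prop) : pbool P = true <-> P.
Proof. by rewrite /pbool; case: excluded_middle_informative. Qed.

Section Copies.

Variables (W V : finType) (H : sgraph W).

Lemma copy_le_graph (S F K : sgraph V) :
  le_graph S F -> is_copy H S K -> is_copy H F K.
Proof.
move=> [SFv SFe] [f [f_inj f_verts f_edges ->]]; exists f; split => //.
- exact: subset_trans SFv.
- by move=> e he; apply: (subsetP SFe); apply: f_edges.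
Qed.

Lemma copy_le (S K : sgraph V) : is_copy H S K -> le_graph K S.
Proof.
move=> [f [_ f_verts f_edges ->]]; split => //=.
by apply/subsetP => _ /imsetP [e he ->]; apply: f_edges.
Qed.

End Copies.

Section Survival.

Variables (W V : finType) (H : sgraph W) (b : nat) (S F : sgraph V).
Hypotheses (wf_S : wf_graph S) (stable_S : stable H b S) (le_SF : le_graph S F).

Lemma stable_vertex_in_copy (v : V) :
  v \in verts S -> exists K, is_copy H S K /\ v \in verts K.
Proof.
case: stable_S => no_bad_vertex _ _ _ vS.
by apply: NNPP => no_copy; apply: (no_bad_vertex v).
Qed.

Lemma stable_vertex_not_bad (v : V) : v \in verts S -> ~ bad_vertex H F v.
Proof.
move=> /stable_vertex_in_copy [K [cK vK]] [_]; apply.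
by exists K; split => //; apply: copy_le_graph cK.
Qed.

Lemma stable_edge_not_bad (e : {set V}) : e \in edges S -> ~ bad_edge H F e.
Proof.
case: stable_S => _ no_bad_edge _ _ eS [_ no_copy_F]; apply: (no_bad_edge e).
split=> // -[K [cK eK]]; apply: no_copy_F.
by exists K; split => //; apply: copy_le_graph cK.
Qed.

(* Any nonempty set of at most b+1 vertices of S is hit exactly once by some
   copy of H in S: for one vertex use a copy through it, otherwise use that
   the set is not bad in S. *)
Lemma stable_set_split (U : {set V}) :
  U \subset verts S -> 0 < #|U| <= b.+1 ->
  exists K, is_copy H S K /\ #|verts K :&: U| = 1.
Proof.
case: stable_S => _ _ no_bad_set _ US /andP [U_gt0 U_le].
case: (ltngtP #|U| 1) => [U_lt1|U_gt1|/eqP/cards1P [u defU]].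
- by rewrite ltnNge U_gt0 in U_lt1.
- apply: NNPP => no_copy; apply: (no_bad_set U).
  by split => //; rewrite U_gt1 U_le.
- have uS : u \in verts S by rewrite (subsetP US) // defU set11.
  have [K [cK uK]] := stable_vertex_in_copy uS.
  exists K; split => //; apply/eqP/cards1P; exists u.
  by apply/setP => x; rewrite defU !inE; case: eqP => [->|]; rewrite ?uK ?andbF.
Qed.

Lemma stable_disjoint_bad_set (U : {set V}) : bad_set H b F U -> [disjoint verts S & U].
Proof.
move=> [_ /andP [U_ge2 U_le] no_split].
apply: NNPP => meets; apply: no_split.
set U' := verts S :&: U.
have U'_gt0 : 0 < #|U'|.
  rewrite card_gt0; apply: contra_notN meets => /eqP U'0.
  by rewrite -setI_eq0 -/U' U'0.
have U'_range : 0 < #|U'| <= b.+1.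
  by rewrite U'_gt0 (leq_trans (subset_leq_card (subsetIr _ _)) U_le).
have [K [cK hK]] := stable_set_split (subsetIl _ _) U'_range.
exists K; split; first exact: copy_le_graph cK.
have [KSv _] := copy_le cK.
by rewrite -hK /U' setIA (setIidPl KSv).
Qed.

Lemma connect_le_graph (x y : V) : connect (adj S) x y -> connect (adj F) x y.
Proof.
case: le_SF => _ SFe; apply: connect_sub => u w uw.
by apply: connect1; rewrite /adj (subsetP SFe).
Qed.

(* A small component of F does not meet S: the component of S through a
   common vertex would be contained in it, hence small. *)
Lemma stable_disjoint_small_component (C : {set V}) :
  small_component H b F C -> [disjoint verts S & C].
Proof.
case: stable_S => _ _ _ no_small [[x xF ->] C_small].
rewrite disjoints_subset; apply/subsetP => z zS; rewrite !inE.
apply/negP => /andP [zF xz].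
apply: (no_small [set y in verts S | connect (adj S) z y]); split; first by exists z.
apply: leq_trans C_small; apply: subset_leq_card; apply/subsetP => y.
rewrite !inE => /andP [yS zy].
by rewrite (subsetP le_SF.1) //= (connect_trans xz (connect_le_graph zy)).
Qed.

Lemma le_del_verts (U : {set V}) : [disjoint verts S & U] -> le_graph S (del_verts F U).
Proof.
case: le_SF => SFv SFe dSU; split; first by rewrite subsetD SFv.
apply/subsetP => e eS; rewrite inE (subsetP SFe) //=.
by have [_ eSv] := wf_S eS; apply: disjointWl dSU.
Qed.

Lemma stable_survives_step (F' : sgraph V) : del_step H b F F' -> le_graph S F'.
Proof.
case=> [v bad_v|e bad_e|U bad_U|C small_C].
- apply: le_del_verts; rewrite disjoint_sym disjoints1.
  by apply/negP => vS; apply: (stable_vertex_not_bad vS).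
- have eS : e \notin edges S by apply/negP => eS; apply: (stable_edge_not_bad eS).
  case: le_SF => SFv SFe; split => //.
  by rewrite /del_edge /edges /= subsetD1 SFe.
- exact/le_del_verts/stable_disjoint_bad_set.
- exact/le_del_verts/stable_disjoint_small_component.
Qed.

End Survival.

Section Steps.

Variables (W V : finType) (H : sgraph W) (b : nat).

Local Notation step := (del_step H b).

Lemma wf_del_verts (F : sgraph V) (U : {set V}) : wf_graph F -> wf_graph (del_verts F U).
Proof.
move=> wF e; rewrite /del_verts /edges /= inE => /andP [eF dU].
have [e2 eFv] := wF e eF.
by split => //; rewrite subsetD eFv.
Qed.

Lemma step_wf (F F' : sgraph V) : wf_graph F -> step F F' -> wf_graph F'.
Proof.
move=> wF [v _|e _|U _|C _]; try exact: wf_del_verts.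
by move=> e'; rewrite /del_edge /edges /= in_setD1 => /andP [_ /wF].
Qed.

Lemma le_del_verts_self (F : sgraph V) (U : {set V}) : le_graph (del_verts F U) F.
Proof.
split; first exact: subsetDl.
by apply/subsetP => e; rewrite inE => /andP [].
Qed.

Lemma step_le (F F' : sgraph V) : step F F' -> le_graph F' F.
Proof.
case=> [v _|e _|U _|C _]; try exact: le_del_verts_self.
by split => //; apply: subsetDl.
Qed.

Definition graph_size (F : sgraph V) : nat := #|verts F| + #|edges F|.

Lemma del_verts_shrinks (F : sgraph V) (U : {set V}) (u : V) :
  u \in verts F -> u \in U -> graph_size (del_verts F U) < graph_size F.
Proof.
move=> uF uU; rewrite /graph_size -addSn; apply: leq_add.
  apply: proper_card; apply/properP; split; first exact: subsetDl.
  by exists u; rewrite // inE uU.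
by apply: subset_leq_card; apply/subsetP => e; rewrite inE => /andP [].
Qed.

Lemma step_shrinks (F F' : sgraph V) : step F F' -> graph_size F' < graph_size F.
Proof.
case=> [v [vF _]|e [eF _]|U [UF /andP [U_ge2 _] _]|C [[x xF ->] _]].
- exact: (del_verts_shrinks vF (set11 v)).
- by rewrite /graph_size ltn_add2l [ltnRHS](cardsD1 e) eF.
- have /card_gt0P [u uU] : 0 < #|U| by apply: leq_trans U_ge2.
  exact: (del_verts_shrinks (subsetP UF u uU) uU).
- by apply: (del_verts_shrinks xF); rewrite inE xF connect0.
Qed.

Lemma step_acc (G : sgraph V) : Acc (fun F' F => step F F') G.
Proof.
apply: (@Acc_incl _ _ (ltof _ graph_size)); last exact: well_founded_ltof.
by move=> F' F st; apply/ltP/step_shrinks.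
Qed.

Lemma terminal_reachable (G : sgraph V) :
  exists F, clos_refl_trans _ step G F /\ (forall F', ~ step F F').
Proof.
elim: (step_acc G) => {}G _ IH.
case: (classic (exists F', step G F')) => [[F' st]|no_step].
  have [F [reach term]] := IH F' st; exists F; split => //.
  exact: rt_trans (rt_step _ _ _ _ st) reach.
by exists G; split; [apply: rt_refl|move=> F' st; apply: no_step; exists F'].
Qed.

Lemma terminal_stable (F : sgraph V) : (forall F', ~ step F F') -> stable H b F.
Proof.
move=> term; split => [v|e|U|C] bad; apply: term.
- exact: step_vertex bad.
- exact: step_edge bad.
- exact: step_set bad.
- exact: step_comp bad.
Qed.

Lemma reachable_invariant (F F' : sgraph V) :
  clos_refl_trans _ step F F' -> wf_graph F ->
  [/\ wf_graph F', le_graph F' F &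
      forall S, wf_graph S -> stable H b S -> le_graph S F -> le_graph S F'].
Proof.
elim=> {F F'} [F F' st|F|F1 F2 F3 _ IH12 _ IH23] wF.
- by split; [apply: step_wf st|apply: step_le st|move=> S wS sS leSF; apply: stable_survives_step st].
- by split => //; apply: le_graph_refl.
- have [wF2 le21 keep12] := IH12 wF; have [wF3 le32 keep23] := IH23 wF2.
  split => //; first exact: le_graph_trans le21.
  by move=> S wS sS le1; apply: keep23 => //; apply: keep12.
Qed.

End Steps.

Lemma core_greatest {W V : finType} (H : sgraph W) b (G F : sgraph V) :
  subgraph F G -> stable H b F ->
  (forall S, subgraph S G -> stable H b S -> le_graph S F) -> F = core H b G.
Proof.
move=> subFG stF greatest.
have inF : pbool (subgraph F G /\ stable H b F) by apply/pboolP.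
rewrite [F]surjective_pairing /core; congr pair; apply/setP => x; apply/idP/idP.
- by move=> xF; apply/bigcupP; exists F.
- by case/bigcupP => S /pboolP [subS stS]; apply: (subsetP (greatest S subS stS).1).
- by move=> xF; apply/bigcupP; exists F.
- by case/bigcupP => S /pboolP [subS stS]; apply: (subsetP (greatest S subS stS).2).
Qed.

Lemma terminal_is_core {W V : finType} (H : sgraph W) b (G F : sgraph V) :
  wf_graph G -> clos_refl_trans _ (del_step H b) G F ->
  (forall F', ~ del_step H b F F') -> F = core H b G.
Proof.
move=> wG reach term; have [wF [FGv FGe] keep] := reachable_invariant reach wG.
apply: core_greatest; [by split|exact: terminal_stable|].
by move=> S [SGv SGe wS] stS; apply: keep.
Qed.

Theorem mainTheorem13 (W V : finType) (H : sgraph W) (G : sgraph V) (b : nat) :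
  wf_graph H -> connected_graph H -> wf_graph G -> 0 < b ->
  [/\ Acc (fun F' F => del_step H b F F') G,
      (forall F, clos_refl_trans (sgraph V) (del_step H b) G F ->
                 (forall F', ~ del_step H b F F') -> F = core H b G) &
      stable H b (core H b G)].
Proof.
move=> _ _ wG _; split; first exact: step_acc.
- by move=> F; apply: terminal_is_core.
- have [F [reach term]] := terminal_reachable H b G.
  by rewrite -(terminal_is_core wG reach term); apply: terminal_stable.
Qed.
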